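(* (Correctness.) Let $A$ be a ground (base) type and $v$ a value of type $A$. If $\cdot\vdash M:A$ in CC and $M\triangleright^* v$, then $\Delta_\Gamma\cup\Delta_M\vdash[\![M]\!]\triangleright^* v'$ in DCC for some $v'$ with $v'\equiv[\![v]\!]$, where $\Gamma=\cdot$, $\Delta_\Gamma=[\![\Gamma]\!]_d$ and $\Delta_M=[\![M]\!]_d$.
   Context: CC is the Calculus of Constructions with universes $U_0,U_1,\dots$, informally extended with base (ground) types such as the unit type and natural numbers whose types and values contain no $\lambda$-abstractions. Expressions $x\mid U_i\mid\Pi x{:}A.B\mid L\,M\mid\lambda x{:}A.M$; reduction $(\lambda x{:}A.N)\,M\triangleright N[M/x]$, $\triangleright^*$ zero or more steps; typing $\Gamma\vdash M:A$ by the standard CC rules (variable, $U_i:U_{i+1}$, $\Pi$ in $U_{\max(i,j)}$, application with result type $B[N/x]$, abstraction, conversion up to $\beta\eta$-equivalence). DCC: expressions $x\mid U_i\mid\Pi x{:}A.B\mid L@M\mid\ell_i\{\overline M\}$ with label names $\ell_i$ and lists $\overline M$; label contexts $\Delta::=\cdot\mid\Delta,\ell_i(\{\overline x{:}\overline A\},x{:}A\mapsto L:B)$. Reduction: $\Delta\vdash\ell\{\overline M\}@N\triangleright L[\overline M/\overline x,N/x]$ when $\ell(\{\overline x{:}\overline A\},x{:}A\mapsto L:B)\in\Delta$; $\triangleright^*$ zero or more steps. Equivalence $\equiv$ in DCC: two terms are equivalent if they reduce to a common term, or by the $\eta$-rule: if $L\triangleright^*\ell\{\overline N\}$, $M\triangleright^*M'$,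 $\ell(\{\overline x{:}\overline A\},x{:}A\mapsto N:B)\in\Delta$ and $N[\overline N/\overline x]\equiv M'@x$ then $L\equiv M$ (and symmetrically). Translation (by induction on the implicit typing derivation; each source $\lambda$ has a distinct tag $i$, written $\lambda^i$, corresponding to label $\ell_i$). $\mathrm{FV}(M)$ for $\Gamma\vdash M:A$: with $x_1,\dots,x_n$ the unbound variables of $M$ and $A$ and $\Gamma\vdash x_k:A_k$, $\mathrm{FV}(M)=\mathrm{FV}(A_1)\cup\dots\cup\mathrm{FV}(A_n)\cup(x_1{:}A_1,\dots,x_n{:}A_n)$, where $\cup$ appends the entries of the right operand not already in the left, preserving order. $[\![-]\!]$: $x\mapsto x$, $U_i\mapsto U_i$, $\Pi x{:}A.B\mapsto\Pi x{:}[\![A]\!].[\![B]\!]$, $M\,N\mapsto[\![M]\!]@[\![N]\!]$, $\lambda^ix{:}A.M\mapsto\ell_i\{\overline x\}$ where $\overline x{:}\overline A=\mathrm{FV}(\lambda^ix{:}A.M)$; base types and values translate to themselves. $[\![-]\!]_d$: universe (and base types/values) $\mapsto\cdot$; variable of type $A\mapsto[\![A]\!]_d$; $\Pi x{:}A.B\mapsto[\![A]\!]_d\cup[\![B]\!]_d$; $M\,N:B[N/x]$ (with $M:\Pi x{:}A.B$) $\mapsto[\![M]\!]_d\cup[\![N]\!]_d\cup[\![B[N/x]]\!]_d$; $\lambda^ix{:}A.M:\Pi x{:}A.B\mapsto([\![A]\!]_d\cup[\![M]\!]_d),\ell_i(\{\overline x{:}[\![\overline A]\!]\},x{:}[\![A]\!]\mapsto[\![M]\!]:[\![B]\!])$;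 a conversion from $M:A$ to $M:B\mapsto[\![M]\!]_d\cup[\![B]\!]_d$. On contexts: $[\![\cdot]\!]_d=\cdot$, $[\![\Gamma,x{:}A]\!]_d=[\![\Gamma]\!]_d\cup[\![A]\!]_d$. *)

From Stdlib Require Import List Arith Bool Relations.
Import ListNotations.

(* [Lam t A M] is lambda^t x:A. M  (t = the distinct tag of this lambda).
   [Base b] is the b-th base (ground) type, [Val b n] its n-th value. *)
Inductive term : Type :=
| var (n : nat)
| U (i : nat)
| Pi (A B : term)
| App (M N : term)
| Lam (t : nat) (A M : term)
| Base (b : nat)
| Val (b n : nat).

Definition up_ren (r : nat -> nat) : nat -> nat :=
  fun i => match i with 0 => 0 | S i => S (r i) end.

Fixpoint ren (r : nat -> nat) (t : term) : term :=
  match t with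
  | var n => var (r n)
  | U i => U i
  | Pi A B => Pi (ren r A) (ren (up_ren r) B)
  | App M N => App (ren r M) (ren r N)
  | Lam l A M => Lam l (ren r A) (ren (up_ren r) M)
  | Base b => Base b
  | Val b n => Val b n
  end.

Definition lift (k : nat) (t : term) : term := ren (fun i => k + i) t.

Definition up (s : nat -> term) : nat -> term :=
  fun i => match i with 0 => var 0 | S i => lift 1 (s i) end.

Fixpoint subst (s : nat -> term) (t : term) : term :=
  match t with
  | var n => s n
  | U i => U i
  | Pi A B => Pi (subst s A) (subst (up s) B)
  | App M N => App (subst s M) (subst s N)
  | Lam l A M => Lam l (subst s A) (subst (up s) M)
  | Base b => Base b
  | Val b n => Val b n
  end.

Definition subst1 (M N : term) : term :=
  subst (fun i => match i with 0 => N | S j => var j end) M.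

Inductive compat (R : term -> term -> Prop) : term -> term -> Prop :=
| c_base x y : R x y -> compat R x y
| c_piL A A' B : compat R A A' -> compat R (Pi A B) (Pi A' B)
| c_piR A B B' : compat R B B' -> compat R (Pi A B) (Pi A B')
| c_appL M M' N : compat R M M' -> compat R (App M N) (App M' N)
| c_appR M N N' : compat R N N' -> compat R (App M N) (App M N')
| c_lamA l A A' M : compat R A A' -> compat R (Lam l A M) (Lam l A' M)
| c_lamM l A M M' : compat R M M' -> compat R (Lam l A M) (Lam l A M').

Inductive beta_contr : term -> term -> Prop :=
| beta_c l A M N : beta_contr (App (Lam l A M) N) (subst1 M N).

(* eta: lambda x:A. M' x  |>  M'   (x not free in M') *)
Inductive eta_contr : term -> term -> Prop :=
| eta_c l A M : eta_contr (Lam l A (App (lift 1 M) (var 0))) M.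

Definition step : term -> term -> Prop := compat beta_contr.
Definition red : term -> term -> Prop := clos_refl_trans term step.

Definition conv : term -> term -> Prop :=
  clos_refl_sym_trans term (compat (fun x y => beta_contr x y \/ eta_contr x y)).

Fixpoint tags (t : term) : list nat :=
  match t with
  | var _ | U _ | Base _ | Val _ _ => []
  | Pi A B => tags A ++ tags B
  | App M N => tags M ++ tags N
  | Lam l A M => l :: tags A ++ tags M
  end.

Fixpoint occ (k : nat) (t : term) : bool :=
  match t with
  | var n => Nat.eqb n k
  | U _ | Base _ | Val _ _ => false
  | Pi A B => occ k A || occ (S k) B
  | App M N => occ k M || occ k N
  | Lam _ A M => occ k A || occ (S k) M
  end.

Inductive dterm : Type :=
| dvar (n : nat)
| dU (i : nat)
| dPi (A B : dterm)
| dApp (L M : dterm)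
| dLab (l : nat) (args : list dterm)
| dBase (b : nat)
| dVal (b n : nat).

Fixpoint dren (r : nat -> nat) (t : dterm) : dterm :=
  match t with
  | dvar n => dvar (r n)
  | dU i => dU i
  | dPi A B => dPi (dren r A) (dren (up_ren r) B)
  | dApp L M => dApp (dren r L) (dren r M)
  | dLab l args => dLab l (map (dren r) args)
  | dBase b => dBase b
  | dVal b n => dVal b n
  end.

Definition dlift (k : nat) (t : dterm) : dterm := dren (fun i => k + i) t.

Definition dup (s : nat -> dterm) : nat -> dterm :=
  fun i => match i with 0 => dvar 0 | S i => dlift 1 (s i) end.

Fixpoint dsubst (s : nat -> dterm) (t : dterm) : dterm :=
  match t with
  | dvar n => s n
  | dU i => dU i
  | dPi A B => dPi (dsubst s A) (dsubst (dup s) B)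
  | dApp L M => dApp (dsubst s L) (dsubst s M)
  | dLab l args => dLab l (map (dsubst s) args)
  | dBase b => dBase b
  | dVal b n => dVal b n
  end.

Fixpoint dterm_eqb (s t : dterm) : bool :=
  match s, t with
  | dvar n, dvar m => Nat.eqb n m
  | dU i, dU j => Nat.eqb i j
  | dPi A B, dPi A' B' => dterm_eqb A A' && dterm_eqb B B'
  | dApp L M, dApp L' M' => dterm_eqb L L' && dterm_eqb M M'
  | dLab l a, dLab l' a' =>
      Nat.eqb l l' &&
      (fix go (a a' : list dterm) : bool :=
         match a, a' with
         | [], [] => true
         | x :: a, y :: a' => dterm_eqb x y && go a a'
         | _, _ => false
         end) a a'
  | dBase b, dBase b' => Nat.eqb b b'
  | dVal b n, dVal b' n' => Nat.eqb b b' && Nat.eqb n n'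
  | _, _ => false
  end.

Fixpoint dlist_eqb (a a' : list dterm) : bool :=
  match a, a' with
  | [], [] => true
  | x :: a, y :: a' => dterm_eqb x y && dlist_eqb a a'
  | _, _ => false
  end.

(* A label-context entry  ell_name({xs : params}, x : argty |-> body : resty).
   params is a telescope: the k-th parameter type lives in the context of the
   k previous parameters; body and resty live in the context params, x
   (de Bruijn index 0 = x, index j+1 = the (n-j)-th parameter). *)
Record lentry : Type := mkL {
  lname : nat;
  lparams : list dterm;
  largty : dterm;
  lbody : dterm;
  lresty : dterm }.

Definition lctx := list lentry.

Definition lentry_eqb (e f : lentry) : bool :=
  Nat.eqb (lname e) (lname f) && dlist_eqb (lparams e) (lparams f) &&
  dterm_eqb (largty e) (largty f) && dterm_eqb (lbody e) (lbody f) &&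
  dterm_eqb (lresty e) (lresty f).

Definition lunion (D1 D2 : lctx) : lctx :=
  D1 ++ filter (fun e => negb (existsb (lentry_eqb e) D1)) D2.

(* the substitution [args/xs, N/x] for a label body *)
Definition lab_sub (args : list dterm) (N : dterm) : nat -> dterm :=
  let n := length args in
  fun i => match i with
           | 0 => N
           | S j => if j <? n then nth (n - 1 - j) args (dvar 0) else dvar (j - n)
           end.

Inductive dcompat (R : dterm -> dterm -> Prop) : dterm -> dterm -> Prop :=
| dc_base x y : R x y -> dcompat R x y
| dc_piL A A' B : dcompat R A A' -> dcompat R (dPi A B) (dPi A' B)
| dc_piR A B B' : dcompat R B B' -> dcompat R (dPi A B) (dPi A B')
| dc_appL L L' M : dcompat R L L' -> dcompat R (dApp L M) (dApp L' M)
| dc_appR L M M' : dcompat R M M' -> dcompat R (dApp L M) (dApp L M')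
| dc_lab l a1 a2 x y :
    dcompat R x y -> dcompat R (dLab l (a1 ++ x :: a2)) (dLab l (a1 ++ y :: a2)).

Inductive dcontr (D : lctx) : dterm -> dterm -> Prop :=
| dcontr_lab e args N :
    In e D ->
    dcontr D (dApp (dLab (lname e) args) N) (dsubst (lab_sub args N) (lbody e)).

Definition dstep (D : lctx) : dterm -> dterm -> Prop := dcompat (dcontr D).
Definition dred (D : lctx) : dterm -> dterm -> Prop := clos_refl_trans dterm (dstep D).

(* DCC equivalence: common reduct, or the eta-rule (and its symmetric form).
   The fresh variable x of the eta-rule is de Bruijn index 0 of an extended
   context. *)
Inductive dequiv (D : lctx) : dterm -> dterm -> Prop :=
| deq_red L M N : dred D L N -> dred D M N -> dequiv D L M
| deq_etaL L M Ns M' e :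
    dred D L (dLab (lname e) Ns) -> dred D M M' -> In e D ->
    dequiv D (dsubst (lab_sub (map (dlift 1) Ns) (dvar 0)) (lbody e))
             (dApp (dlift 1 M') (dvar 0)) ->
    dequiv D L M
| deq_etaR L M Ns M' e :
    dred D L (dLab (lname e) Ns) -> dred D M M' -> In e D ->
    dequiv D (dsubst (lab_sub (map (dlift 1) Ns) (dvar 0)) (lbody e))
             (dApp (dlift 1 M') (dvar 0)) ->
    dequiv D M L.

(* Contexts: [Gamma : list term], head = most recent variable (index 0).
   A variable of index i in a context of length g has level g-1-i. *)

Definition lev2 (g : nat) (M A : term) : list nat :=
  filter (fun l => occ (g - 1 - l) M || occ (g - 1 - l) A) (seq 0 g).

Definition nunion (L1 L2 : list nat) : list nat :=
  L1 ++ filter (fun x => negb (existsb (Nat.eqb x) L1)) L2.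

(* tyfv Gamma l = FV(A_l), where A_l is the type of the variable of level l
   (which lives in the prefix context of length l):
   FV(A_l) = FV(A_1') cup ... cup FV(A_m') cup (y_1:A_1', ..., y_m:A_m')
   with y_1..y_m the free variables of A_l (its type is a universe). *)
Fixpoint tyfv (G : list term) (l : nat) : list nat :=
  match G with
  | [] => []
  | A :: G' =>
      if Nat.eqb l (length G')
      then let L := lev2 (length G') A A in
           nunion (fold_left nunion (map (tyfv G') L) []) L
      else tyfv G' l
  end.

Definition FV (G : list term) (M A : term) : list nat :=
  let L := lev2 (length G) M A in
  nunion (fold_left nunion (map (tyfv G) L) []) L.

Fixpoint index_of (l : nat) (xs : list nat) : nat :=
  match xs with
  | [] => 0
  | x :: xs => if Nat.eqb x l then 0 else S (index_of l xs)
  end.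

(* move a DCC term from a context of length p to one of length q, sending the
   variable of level l to the variable of level f l *)
Definition relevel (p q : nat) (f : nat -> nat) (t : dterm) : dterm :=
  dren (fun i => q - 1 - f (p - 1 - i)) t.

(* translated context information: for each variable (head = index 0) the
   pair ([[A]], [[A]]_d) of its type *)
Definition cinfo := list (dterm * lctx).

(* the entry ell_t({xs : [[As]]}, x : [[A]] |-> [[M]] : [[B]]) *)
Definition lam_entry (G : list term) (E : cinfo) (t : nat) (xs : list nat)
    (A' M' B' : dterm) : lentry :=
  let g := length G in
  let n := length xs in
  let pos := fun l => index_of l xs in
  let fb := fun l => if Nat.eqb l g then n else pos l in
  mkL t
      (map (fun kl => relevel (snd kl) (fst kl) pos
                        (fst (nth (g - 1 - snd kl) E (dU 0, []))))
           (combine (seq 0 n) xs))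
      (relevel g n pos A')
      (relevel (S g) (S n) fb M')
      (relevel (S g) (S n) fb B').

Fixpoint ctxd (E : cinfo) : lctx :=
  match E with
  | [] => []
  | (_, DA) :: E' => lunion (ctxd E') DA
  end.

(* CC typing derivations together with the translation computed along them:
   tr G E M A M' DM  means  G |- M : A  with  [[M]] = M'  and  [[M]]_d = DM,
   E recording the translations of the types in G. *)
Inductive wf : list term -> cinfo -> Prop :=
| wf_nil : wf [] []
| wf_cons G E A i A' DA :
    wf G E -> tr G E A (U i) A' DA -> wf (A :: G) ((A', DA) :: E)
with tr : list term -> cinfo -> term -> term -> dterm -> lctx -> Prop :=
| tr_var G E k A A' DA :
    wf G E -> nth_error G k = Some A -> nth_error E k = Some (A', DA) ->
    tr G E (var k) (lift (S k) A) (dvar k) DA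
| tr_univ G E i :
    wf G E -> tr G E (U i) (U (S i)) (dU i) []
| tr_base G E b :
    wf G E -> tr G E (Base b) (U 0) (dBase b) []
| tr_val G E b n :
    wf G E -> tr G E (Val b n) (Base b) (dVal b n) []
| tr_pi G E A B i j A' DA B' DB :
    tr G E A (U i) A' DA ->
    tr (A :: G) ((A', DA) :: E) B (U j) B' DB ->
    tr G E (Pi A B) (U (Nat.max i j)) (dPi A' B') (lunion DA DB)
| tr_app G E M N A B k M' DM N' DN T' DT :
    tr G E M (Pi A B) M' DM ->
    tr G E N A N' DN ->
    tr G E (subst1 B N) (U k) T' DT ->
    tr G E (App M N) (subst1 B N) (dApp M' N') (lunion (lunion DM DN) DT)
| tr_lam G E t A M B i j A' DA B' DB M' DM :
    tr G E A (U i) A' DA ->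
    tr (A :: G) ((A', DA) :: E) B (U j) B' DB ->
    tr (A :: G) ((A', DA) :: E) M B M' DM ->
    tr G E (Lam t A M) (Pi A B)
       (dLab t (map (fun l => dvar (length G - 1 - l)) (FV G (Lam t A M) (Pi A B))))
       (lunion DA DM ++ [lam_entry G E t (FV G (Lam t A M) (Pi A B)) A' M' B'])
| tr_conv G E M A B i M' DM B' DB :
    tr G E M A M' DM ->
    tr G E B (U i) B' DB ->
    conv A B ->
    tr G E M B M' (lunion DM DB).

(* A DCC term [d] simulates a CC term [m] ([sim]) when they agree constructor
   by constructor, except that a label [ℓ_t{args}] matches [λ^t x. m] as soon as
   the body of some entry [ℓ_t], opened at [args], reduces to a term simulating
   [m].  A typed term is simulated by its translation in any label context
   containing its [[-]]_d: the body of [lam_entry] is the translated body renamed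
   into the parameter context, and the label passes back exactly the variables
   that [FV] recorded.  Simulation is stable under substitution, so a β-step
   [(λ^t x. m) n ▷ m[n/x]] is matched by a label contraction followed by the
   reductions recorded for the body.  Hence [M ▷* v] is matched by
   [[M]] ▷* v' with [v'] simulating the ground value [v], which forces [v' = v]. *)

From Stdlib Require Import List Arith Lia Bool Relations.
Import ListNotations.

Fixpoint dterm_nested_ind (P : dterm -> Prop)
  (Hvar : forall n, P (dvar n)) (HU : forall i, P (dU i))
  (HPi : forall A B, P A -> P B -> P (dPi A B))
  (HApp : forall L M, P L -> P M -> P (dApp L M))
  (HLab : forall l args, Forall P args -> P (dLab l args))
  (HBase : forall b, P (dBase b)) (HVal : forall b n, P (dVal b n))
  (t : dterm) {struct t} : P t :=
  let rec := dterm_nested_ind P Hvar HU HPi HApp HLab HBase HVal in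
  match t with
  | dvar n => Hvar n
  | dU i => HU i
  | dPi A B => HPi A B (rec A) (rec B)
  | dApp L M => HApp L M (rec L) (rec M)
  | dLab l args =>
      HLab l args ((fix go (a : list dterm) : Forall P a :=
                      match a with
                      | [] => Forall_nil P
                      | x :: a' => Forall_cons x (rec x) (go a')
                      end) args)
  | dBase b => HBase b
  | dVal b n => HVal b n
  end.

Ltac map_ext_Forall :=
  match goal with H : Forall _ _ |- _ =>
    rewrite Forall_forall in H; apply map_ext_in; intros; eauto end.

Lemma dren_ext t r r' : (forall i, r i = r' i) -> dren r t = dren r' t.
Proof.
  revert r r'; induction t using dterm_nested_ind; intros r r' Hr; simpl; f_equal; auto.
  - apply IHt2; intros [|i]; simpl; auto.
  - map_ext_Forall.
Qed.

Lemma dsubst_ext t s s' : (forall i, s i = s' i) -> dsubst s t = dsubst s' t.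
Proof.
  revert s s'; induction t using dterm_nested_ind; intros s s' Hs; simpl; f_equal; auto.
  - apply IHt2; intros [|i]; simpl; rewrite ?Hs; auto.
  - map_ext_Forall.
Qed.

Lemma dren_dren t r r' : dren r (dren r' t) = dren (fun i => r (r' i)) t.
Proof.
  revert r r'; induction t using dterm_nested_ind; intros r r'; simpl; f_equal; auto.
  - rewrite IHt2; apply dren_ext; intros [|i]; simpl; auto.
  - rewrite map_map; map_ext_Forall.
Qed.

Lemma dsubst_dren t s r : dsubst s (dren r t) = dsubst (fun i => s (r i)) t.
Proof.
  revert s r; induction t using dterm_nested_ind; intros s r; simpl; f_equal; auto.
  - rewrite IHt2; apply dsubst_ext; intros [|i]; simpl; auto.
  - rewrite map_map; map_ext_Forall.
Qed.

Lemma dren_dsubst t s r : dren r (dsubst s t) = dsubst (fun i => dren r (s i)) t.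
Proof.
  revert s r; induction t using dterm_nested_ind; intros s r; simpl; f_equal; auto.
  - rewrite IHt2; apply dsubst_ext; intros [|i]; simpl; auto.
    unfold dlift; rewrite !dren_dren; apply dren_ext; auto.
  - rewrite map_map; map_ext_Forall.
Qed.

Lemma dsubst_dup_dlift t s : dsubst (dup s) (dlift 1 t) = dlift 1 (dsubst s t).
Proof.
  unfold dlift; rewrite dsubst_dren, dren_dsubst; apply dsubst_ext; auto.
Qed.

Lemma dsubst_dsubst t s s' :
  dsubst s (dsubst s' t) = dsubst (fun i => dsubst s (s' i)) t.
Proof.
  revert s s'; induction t using dterm_nested_ind; intros s s'; simpl; f_equal; auto.
  - rewrite IHt2; apply dsubst_ext; intros [|i]; simpl; auto.
    apply dsubst_dup_dlift.
  - rewrite map_map; map_ext_Forall.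
Qed.

Lemma dren_dvar t r : dren r t = dsubst (fun i => dvar (r i)) t.
Proof.
  revert r; induction t using dterm_nested_ind; intros r; simpl; f_equal; auto.
  - rewrite IHt2; apply dsubst_ext; intros [|i]; simpl; auto.
  - map_ext_Forall.
Qed.

Lemma dsubst_dvar t : dsubst dvar t = t.
Proof.
  induction t using dterm_nested_ind; simpl; f_equal; auto.
  - rewrite <- IHt2 at 2; apply dsubst_ext; intros [|i]; simpl; auto.
  - rewrite <- map_id; map_ext_Forall.
Qed.

Lemma subst_ext t s s' : (forall i, s i = s' i) -> subst s t = subst s' t.
Proof.
  revert s s'; induction t; intros s s' Hs; simpl; f_equal; auto;
    [apply IHt2 | apply IHt2]; intros [|i]; simpl; rewrite ?Hs; auto.
Qed.

Lemma subst_var t : subst var t = t.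
Proof.
  induction t; simpl; f_equal; auto;
    [rewrite <- IHt2 at 2 | rewrite <- IHt2 at 2];
    apply subst_ext; intros [|i]; simpl; auto.
Qed.

Lemma dterm_eqb_sound s t : dterm_eqb s t = true -> s = t.
Proof.
  revert t; induction s using dterm_nested_ind; destruct t; simpl; intros Heq;
    try discriminate; rewrite ?andb_true_iff, ?Nat.eqb_eq in Heq;
    intuition (subst; f_equal; auto).
  revert args0 H1; induction H; destruct args0; simpl; intros Hargs;
    try discriminate; auto.
  apply andb_true_iff in Hargs as [Hx Hargs]; f_equal; auto.
Qed.

Definition dscoped (k : nat) (t : dterm) : Prop :=
  forall s1 s2, (forall i, i < k -> s1 i = s2 i) -> dsubst s1 t = dsubst s2 t.

Lemma dscoped_dren k r t : (forall i, r i < k) -> dscoped k (dren r t).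
Proof.
  intros Hr s1 s2 Hs; rewrite !dsubst_dren; apply dsubst_ext; auto.
Qed.

(* Only for bodies scoped to the parameters and the argument does contraction
   commute with substitution. *)
Inductive scoped_contr (D : lctx) : dterm -> dterm -> Prop :=
| scoped_contr_lab e args N :
    In e D -> dscoped (S (length args)) (lbody e) ->
    scoped_contr D (dApp (dLab (lname e) args) N) (dsubst (lab_sub args N) (lbody e)).

Definition sstep (D : lctx) : dterm -> dterm -> Prop := dcompat (scoped_contr D).
Definition sred (D : lctx) : dterm -> dterm -> Prop := clos_refl_trans dterm (sstep D).

Lemma sred_dred D x y : sred D x y -> dred D x y.
Proof.
  induction 1 as [x y Hxy| |]; [|apply rt_refl|eapply rt_trans; eauto].
  apply rt_step; induction Hxy as [x y []| | | | |]; try (constructor; auto; fail).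
  do 2 constructor; auto.
Qed.

Lemma sred_congr D (f : dterm -> dterm) :
  (forall x y, sstep D x y -> sstep D (f x) (f y)) ->
  forall x y, sred D x y -> sred D (f x) (f y).
Proof.
  intros Hf x y; induction 1; [apply rt_step; auto|apply rt_refl|eapply rt_trans; eauto].
Qed.

Lemma nth_map_dvar (f : dterm -> dterm) l k d :
  k < length l -> nth k (map f l) d = f (nth k l (dvar 0)).
Proof.
  intros Hk; rewrite nth_indep with (d' := f (dvar 0)) by (rewrite length_map; auto).
  apply map_nth.
Qed.

Lemma lab_sub_dsubst s args N j : j < S (length args) ->
  dsubst s (lab_sub args N j) = lab_sub (map (dsubst s) args) (dsubst s N) j.
Proof.
  intros Hj; destruct j as [|j]; simpl; auto; rewrite length_map.
  destruct (Nat.ltb_spec j (length args)); [|lia].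
  rewrite nth_map_dvar by lia; auto.
Qed.

Lemma sstep_dsubst D x y s : sstep D x y -> sstep D (dsubst s x) (dsubst s y).
Proof.
  unfold sstep; intros Hxy; revert s.
  induction Hxy as [x y []| | | | |]; intros s; simpl.
  - rewrite dsubst_dsubst, (H0 _ (lab_sub (map (dsubst s) args) (dsubst s N)))
      by (intros; apply lab_sub_dsubst; auto).
    do 2 constructor; rewrite ?length_map; auto.
  - apply dc_piL; auto.
  - apply dc_piR; auto.
  - apply dc_appL; auto.
  - apply dc_appR; auto.
  - rewrite !map_app; apply dc_lab; auto.
Qed.

Lemma sred_dsubst D x y s : sred D x y -> sred D (dsubst s x) (dsubst s y).
Proof.
  intros; apply (sred_congr D (dsubst s)); auto; intros; apply sstep_dsubst; auto.
Qed.

(* The paper's [L[Ms/xs]], under the binder [x] (de Bruijn index 0). *)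
Definition lab_open (args : list dterm) (body : dterm) : dterm :=
  dsubst (lab_sub (map (dlift 1) args) (dvar 0)) body.

Lemma lab_open_dsubst args body s : dscoped (S (length args)) body ->
  lab_open (map (dsubst s) args) body = dsubst (dup s) (lab_open args body).
Proof.
  intros Hc; unfold lab_open; rewrite dsubst_dsubst; apply Hc.
  intros [|j] Hj; simpl; auto; rewrite !length_map.
  destruct (Nat.ltb_spec j (length args)); [|lia].
  rewrite !nth_map_dvar by (rewrite ?length_map; lia).
  rewrite dsubst_dup_dlift; auto.
Qed.

Lemma lab_open_beta args body N : dscoped (S (length args)) body ->
  dsubst (fun i => match i with 0 => N | S j => dvar j end) (lab_open args body)
  = dsubst (lab_sub args N) body.
Proof.
  intros Hc; unfold lab_open; rewrite dsubst_dsubst; apply Hc.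
  intros [|j] Hj; simpl; auto; rewrite !length_map.
  destruct (Nat.ltb_spec j (length args)); [|lia].
  rewrite nth_map_dvar by lia; unfold dlift; rewrite dsubst_dren; apply dsubst_dvar.
Qed.

Inductive sim (D : lctx) : dterm -> term -> Prop :=
| sim_var k : sim D (dvar k) (var k)
| sim_U i : sim D (dU i) (U i)
| sim_base b : sim D (dBase b) (Base b)
| sim_val b n : sim D (dVal b n) (Val b n)
| sim_pi A B A0 B0 : sim D A A0 -> sim D B B0 -> sim D (dPi A B) (Pi A0 B0)
| sim_app L M L0 M0 : sim D L L0 -> sim D M M0 -> sim D (dApp L M) (App L0 M0)
| sim_lab e args A0 M0 d :
    In e D -> dscoped (S (length args)) (lbody e) ->
    sred D (lab_open args (lbody e)) d -> sim D d M0 ->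
    sim D (dLab (lname e) args) (Lam (lname e) A0 M0).

Lemma dup_dvar r i : dup (fun i => dvar (r i)) i = dvar (up_ren r i).
Proof. destruct i; reflexivity. Qed.

Lemma sim_ren D d m r : sim D d m -> sim D (dsubst (fun i => dvar (r i)) d) (ren r m).
Proof.
  intros Hsim; revert r; induction Hsim; intros r; simpl; try (constructor; auto; fail).
  - constructor; auto; rewrite (dsubst_ext B _ _ (dup_dvar r)); auto.
  - apply sim_lab with (dsubst (fun i => dvar (up_ren r i)) d); rewrite ?length_map; auto.
    rewrite lab_open_dsubst, (dsubst_ext _ _ _ (dup_dvar r)) by auto.
    apply sred_dsubst; auto.
Qed.

Lemma sim_lift D d m : sim D d m -> sim D (dlift 1 d) (lift 1 m).
Proof. intros; unfold dlift, lift; rewrite dren_dvar; apply sim_ren; auto. Qed.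

Lemma sim_up D m s' s :
  (forall i, occ (S i) m = true -> sim D (s' i) (s i)) ->
  forall i, occ i m = true -> sim D (dup s' i) (up s i).
Proof. intros Hs [|i] Hi; [constructor|apply sim_lift, Hs; auto]. Qed.

Lemma sim_subst D d m s' s : sim D d m ->
  (forall i, occ i m = true -> sim D (s' i) (s i)) ->
  sim D (dsubst s' d) (subst s m).
Proof.
  intros Hsim; revert s' s; induction Hsim; intros s' s Hs; simpl in *;
    try (constructor; auto; fail).
  - apply Hs, Nat.eqb_refl.
  - constructor; [apply IHHsim1|apply IHHsim2, sim_up]; intros i Hi;
      apply Hs; rewrite Hi, ?orb_true_r; auto.
  - constructor; [apply IHHsim1|apply IHHsim2]; intros i Hi;
      apply Hs; rewrite Hi, ?orb_true_r; auto.
  - apply sim_lab with (dsubst (dup s') d); rewrite ?length_map; auto.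
    + rewrite lab_open_dsubst by auto; apply sred_dsubst; auto.
    + apply IHHsim, sim_up; intros i Hi; apply Hs; rewrite Hi, orb_true_r; auto.
Qed.

Lemma sim_beta D d M0 N0 e args N :
  In e D -> dscoped (S (length args)) (lbody e) ->
  sred D (lab_open args (lbody e)) d -> sim D d M0 -> sim D N N0 ->
  exists d', sred D (dApp (dLab (lname e) args) N) d' /\ sim D d' (subst1 M0 N0).
Proof.
  intros He Hc Hred Hsim HN.
  exists (dsubst (fun i => match i with 0 => N | S j => dvar j end) d); split.
  - apply rt_trans with (dsubst (lab_sub args N) (lbody e)).
    + apply rt_step, dc_base; constructor; auto.
    + rewrite <- lab_open_beta by auto; apply sred_dsubst; auto.
  - apply sim_subst; auto; intros [|i] _; simpl; auto; constructor.
Qed.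

Lemma sim_step D m m' d : step m m' -> sim D d m ->
  exists d', sred D d d' /\ sim D d' m'.
Proof.
  intros Hstep; revert d.
  induction Hstep as [m m' []|A A' B|A B B'|M M' N|M N N'|t A A' M|t A M M' Hstep IH];
    intros d Hd.
  - inversion Hd as [| | | | |L N' L0 N0 HL HN|]; subst.
    inversion HL; subst; eapply sim_beta; eauto.
  - inversion Hd as [| | | |A0 B0 A1 B1 HA HB| |]; subst.
    destruct (IHHstep _ HA) as (d' & Hred & Hsim); exists (dPi d' B0); split;
      [apply (sred_congr D (fun x => dPi x B0)); auto|constructor; auto].
    intros x y Hxy; apply dc_piL, Hxy.
  - inversion Hd as [| | | |A0 B0 A1 B1 HA HB| |]; subst.
    destruct (IHHstep _ HB) as (d' & Hred & Hsim); exists (dPi A0 d'); split;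
      [apply (sred_congr D (fun x => dPi A0 x)); auto|constructor; auto].
    intros x y Hxy; apply dc_piR, Hxy.
  - inversion Hd as [| | | | |L N0 L0 N1 HL HN|]; subst.
    destruct (IHHstep _ HL) as (d' & Hred & Hsim); exists (dApp d' N0); split;
      [apply (sred_congr D (fun x => dApp x N0)); auto|constructor; auto].
    intros x y Hxy; apply dc_appL, Hxy.
  - inversion Hd as [| | | | |L N0 L0 N1 HL HN|]; subst.
    destruct (IHHstep _ HN) as (d' & Hred & Hsim); exists (dApp L d'); split;
      [apply (sred_congr D (fun x => dApp L x)); auto|constructor; auto].
    intros x y Hxy; apply dc_appR, Hxy.
  - inversion Hd; subst; eexists; split; [apply rt_refl|econstructor; eauto].
  - inversion Hd as [| | | | | |e args A0 M0 d0 He Hc Hred Hsim]; subst.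
    destruct (IH _ Hsim) as (d' & Hred' & Hsim'); eexists; split; [apply rt_refl|].
    apply sim_lab with d'; auto; eapply rt_trans; eauto.
Qed.

Lemma sim_red D m m' d : red m m' -> sim D d m ->
  exists d', sred D d d' /\ sim D d' m'.
Proof.
  intros Hred; revert d; induction Hred as [m m' Hstep|m|m m1 m' _ IH1 _ IH2]; intros d Hd.
  - eapply sim_step; eauto.
  - exists d; split; [apply rt_refl|auto].
  - destruct (IH1 _ Hd) as (d1 & Hred1 & Hsim1); destruct (IH2 _ Hsim1) as (d' & Hred2 & Hsim).
    exists d'; split; [eapply rt_trans|]; eauto.
Qed.

Definition lctx_sub (D1 D2 : lctx) : Prop :=
  forall e, In e D1 -> exists e', In e' D2 /\ lname e' = lname e /\ lbody e' = lbody e.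

Lemma incl_lctx_sub D1 D2 : incl D1 D2 -> lctx_sub D1 D2.
Proof. intros H e He; exists e; auto. Qed.

Lemma lctx_sub_trans D1 D2 D3 : lctx_sub D1 D2 -> lctx_sub D2 D3 -> lctx_sub D1 D3.
Proof.
  intros H12 H23 e He; destruct (H12 e He) as (e' & He' & Hn & Hb).
  destruct (H23 e' He') as (e'' & He'' & Hn' & Hb'); exists e''; repeat split; congruence.
Qed.

Lemma lentry_eqb_sound e f :
  lentry_eqb e f = true -> lname e = lname f /\ lbody e = lbody f.
Proof.
  unfold lentry_eqb; rewrite !andb_true_iff, Nat.eqb_eq.
  intros ((((Hn & _) & _) & Hb) & _); split; auto; apply dterm_eqb_sound; auto.
Qed.

Lemma lctx_sub_lunion_l D1 D2 : lctx_sub D1 (lunion D1 D2).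
Proof. apply incl_lctx_sub, incl_appl, incl_refl. Qed.

Lemma lctx_sub_lunion_r D1 D2 : lctx_sub D2 (lunion D1 D2).
Proof.
  intros e He; unfold lunion; destruct (existsb (lentry_eqb e) D1) eqn:Hex.
  - apply existsb_exists in Hex as (f & Hf & Heq); apply lentry_eqb_sound in Heq as [Hn Hb].
    exists f; repeat split; auto; apply in_or_app; auto.
  - exists e; repeat split; auto; apply in_or_app; right; apply filter_In.
    rewrite Hex; auto.
Qed.

Lemma tr_occ_lt G E M A M' DM : tr G E M A M' DM ->
  forall i, occ i M = true -> i < length G.
Proof.
  induction 1; intros x Hx; simpl in *; try discriminate; auto.
  - apply Nat.eqb_eq in Hx; subst; apply nth_error_Some; congruence.
  - apply orb_true_iff in Hx as [Hx|Hx]; auto; apply IHtr2 in Hx; simpl in Hx; lia.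
  - apply orb_true_iff in Hx as [Hx|Hx]; auto.
  - apply orb_true_iff in Hx as [Hx|Hx]; auto; apply IHtr3 in Hx; simpl in Hx; lia.
Qed.

Lemma In_nunion_r L1 L2 x : In x L2 -> In x (nunion L1 L2).
Proof.
  intros Hx; unfold nunion; destruct (existsb (Nat.eqb x) L1) eqn:Hex.
  - apply existsb_exists in Hex as (y & Hy & Heq); apply Nat.eqb_eq in Heq; subst.
    apply in_or_app; auto.
  - apply in_or_app; right; apply filter_In; rewrite Hex; auto.
Qed.

Lemma occ_Lam_body_In_FV G t A M B k : k < length G -> occ (S k) M = true ->
  In (length G - 1 - k) (FV G (Lam t A M) (Pi A B)).
Proof.
  intros Hk Hocc; apply In_nunion_r; unfold lev2; apply filter_In; split.
  - apply in_seq; lia.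
  - replace (length G - 1 - (length G - 1 - k)) with k by lia; simpl.
    rewrite Hocc, orb_true_r; auto.
Qed.

Lemma index_of_spec l xs :
  In l xs -> index_of l xs < length xs /\ nth (index_of l xs) xs 0 = l.
Proof.
  induction xs as [|x xs IH]; simpl; [tauto|intros Hin].
  destruct (Nat.eqb_spec x l); [subst; simpl; split; auto; lia|].
  destruct Hin as [Hin|Hin]; [congruence|]; destruct (IH Hin); split; auto; lia.
Qed.

(* Renaming the body of [lam_entry] into the parameter context and then opening
   it at the arguments [lam] passes to the label is the identity on the argument
   and on every variable that [FV] recorded. *)
Lemma lab_open_relevel_var g xs i :
  (i = 0 \/ exists k, i = S k /\ k < g /\ In (g - 1 - k) xs) ->
  lab_sub (map (dlift 1) (map (fun l => dvar (g - 1 - l)) xs)) (dvar 0)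
    (S (length xs) - 1 -
     (if Nat.eqb (S g - 1 - i) g then length xs else index_of (S g - 1 - i) xs))
  = dvar i.
Proof.
  intros [->|(k & -> & Hk & Hin)].
  - replace (S g - 1 - 0) with g by lia; rewrite Nat.eqb_refl.
    replace (S (length xs) - 1 - length xs) with 0 by lia; reflexivity.
  - replace (S g - 1 - S k) with (g - 1 - k) by lia.
    destruct (Nat.eqb_spec (g - 1 - k) g); [lia|].
    destruct (index_of_spec _ _ Hin) as [Hp Hnth].
    set (p := index_of (g - 1 - k) xs) in *.
    replace (S (length xs) - 1 - p) with (S (length xs - 1 - p)) by lia; simpl.
    rewrite !length_map; destruct (Nat.ltb_spec (length xs - 1 - p) (length xs)); [|lia].
    replace (length xs - 1 - (length xs - 1 - p)) with p by lia.
    rewrite nth_map_dvar by (rewrite length_map; lia).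
    rewrite nth_indep with (d' := dvar (g - 1 - 0)) by (rewrite length_map; lia).
    rewrite (map_nth (fun l => dvar (g - 1 - l))), Hnth; unfold dlift; simpl; f_equal; lia.
Qed.

Lemma sim_lam_entry D G E t A M B A' M' B' e :
  let xs := FV G (Lam t A M) (Pi A B) in
  In e D -> lname e = t -> lbody e = lbody (lam_entry G E t xs A' M' B') ->
  (forall i, occ i M = true -> i < S (length G)) -> sim D M' M ->
  sim D (dLab t (map (fun l => dvar (length G - 1 - l)) xs)) (Lam t A M).
Proof.
  intros xs He Hn Hb Hscope Hsim; subst t.
  apply sim_lab with (lab_open (map (fun l => dvar (length G - 1 - l)) xs) (lbody e));
    auto; [|apply rt_refl|].
  - rewrite Hb; unfold relevel; apply dscoped_dren; rewrite length_map; intros; lia.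
  - rewrite Hb; simpl; unfold lab_open, relevel; rewrite dsubst_dren, <- (subst_var M).
    apply sim_subst; auto; intros i Hi; rewrite lab_open_relevel_var; [constructor|].
    destruct i as [|k]; [left; auto|right; exists k].
    specialize (Hscope _ Hi); repeat split; try lia.
    apply occ_Lam_body_In_FV; auto; lia.
Qed.

Lemma tr_sim G E M A M' DM D : tr G E M A M' DM -> lctx_sub DM D -> sim D M' M.
Proof.
  intros Htr; revert D.
  induction Htr as [| | | |G E A B i j A' DA B' DB _ IHA _ IHB
                   |G E M N A B k M' DM N' DN T' DT _ IHM _ IHN _ _
                   |G E t A M B i j A' DA B' DB M' DM _ _ _ _ HtrM IHM
                   |G E M A B i M' DM B' DB _ IHM _ _ _]; intros D HD;
    try constructor.
  - apply IHA; eapply lctx_sub_trans; [apply lctx_sub_lunion_l|exact HD].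
  - apply IHB; eapply lctx_sub_trans; [apply lctx_sub_lunion_r|exact HD].
  - apply IHM; do 2 (eapply lctx_sub_trans; [apply lctx_sub_lunion_l|]); exact HD.
  - apply IHN; eapply lctx_sub_trans; [apply lctx_sub_lunion_r|].
    eapply lctx_sub_trans; [apply lctx_sub_lunion_l|exact HD].
  - set (xs := FV G (Lam t A M) (Pi A B)) in *.
    destruct (HD (lam_entry G E t xs A' M' B')) as (e & He & Hn & Hb);
      [apply in_or_app; right; left; auto|].
    apply sim_lam_entry with E A' M' B' e; auto.
    + intros i' Hi'; apply (tr_occ_lt _ _ _ _ _ _ HtrM _ Hi').
    + apply IHM; eapply lctx_sub_trans; [apply lctx_sub_lunion_r|].
      eapply lctx_sub_trans; [apply incl_lctx_sub, incl_appl, incl_refl|exact HD].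
  - apply IHM; eapply lctx_sub_trans; [apply lctx_sub_lunion_l|exact HD].
Qed.

Theorem corollary3p15 (M : term) (b n : nat) (M' : dterm) (DM : lctx) :
  tr [] [] M (Base b) M' DM ->
  NoDup (tags M) ->
  red M (Val b n) ->
  exists v' : dterm,
    dred (lunion (ctxd []) DM) M' v' /\ dequiv (lunion (ctxd []) DM) v' (dVal b n).
Proof.
  intros Htr _ Hred.
  assert (Hsim : sim (lunion (ctxd []) DM) M' M)
    by (apply (tr_sim _ _ _ _ _ _ _ Htr), lctx_sub_lunion_r).
  destruct (sim_red _ _ _ _ Hred Hsim) as (v' & Hred' & Hv').
  inversion Hv'; subst.
  exists (dVal b n); split.
  - apply sred_dred; auto.
  - apply deq_red with (dVal b n); apply rt_refl.
Qed.
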